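(* Let $p>2$ be a prime, $n\ge1$, $A$ a finite abelian $p$-group and $G$ a group containing $A$ as a normal subgroup with $G/A\cong\mathbb{Z}_{p^n}$, generated by the image of an element $t\in G$. If $[e]_\varphi$ is a subgroup of $G$ for every $\varphi\in{\rm Aut}\,G$, then there is a homomorphism $\theta:A\to\Omega_n(A)$ such that $t^{-1}at=a\,\theta(a)$ for all $a\in A$, and $\theta(\Omega_k(A))\le\Omega_{k-1}(A)$ for all $1\le k\le n$.
   Context: For an automorphism $\varphi$ of $G$, $[e]_\varphi=\{z^{-1}\varphi(z)\mid z\in G\}$. $\Omega_k(A)=\{a\in A\mid a^{p^k}=e\}$; in particular $\Omega_0(A)=\{e\}$. *)

From HB Require Import structures.
From mathcomp Require Import all_boot all_fingroup all_solvable.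
Set Implicit Arguments. Unset Strict Implicit. Unset Printing Implicit Defensive.
Local Open Scope group_scope.

Definition twisted_class (gT : finGroupType) (G : {set gT}) (phi : {perm gT})
  : {set gT} := [set z^-1 * phi z | z in G].

Definition Omega_set (gT : finGroupType) (p k : nat) (A : {set gT}) : {set gT} :=
  [set a in A | a ^+ (p ^ k) == 1].

From HB Require Import structures.
From mathcomp Require Import all_boot all_fingroup all_solvable.
Set Implicit Arguments. Unset Strict Implicit. Unset Printing Implicit Defensive.
Local Open Scope group_scope.

(* The map theta a = [a, t] is a homomorphism because A is abelian and normal.
   Conjugation by a in A has twisted class {[z, a]} = {[t^i, a] | i < p^n},
   a subgroup containing [t, a], so [a, t] has order dividing p^n.
   If a has order p and d = [a, t] commutes with t, the map fixing A and
   sending t to t a is an automorphism (p is odd and divides p^n and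
   binom(p^n, 2)) with twisted class {a^i d^binom(i,2)}; closure under
   products gives a^2 = a^i d^binom(i,2), whence i = 2 mod p, then
   p does not divide binom(i, 2), and d = 1.  Since G is a p-group, hence
   nilpotent, iterated commutators with t vanish, so every element of order p
   commutes with t; this gives theta(Omega_k) <= Omega_(k-1). *)

Lemma prime_dvd_bin2 p i : prime p -> (2 < p)%N ->
  (p %| 'C(i, 2))%N = (p %| i)%N || (p %| i.-1)%N.
Proof.
move=> pp p2; have cop2 : coprime p 2.
  by rewrite prime_coprime //; apply/negP=> /(dvdn_leq (isT : 0 < 2)); rewrite leqNgt p2.
rewrite -(Gauss_dvdr _ cop2) mul2n bin2 halfK -Euclid_dvdM //.
by case: i => [|i] //=; rewrite oddM /= andNb subn0.
Qed.

Lemma prime_ndvd_bin2_mod2 p i : prime p -> (2 < p)%N -> (i %% p = 2)%N ->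
  ~~ (p %| 'C(i, 2))%N.
Proof.
move=> pp p2 i2; rewrite prime_dvd_bin2 // negb_or {1}/dvdn i2 /=.
rewrite (divn_eq i p) i2 addn2 /= -addn1 dvdn_addr ?dvdn_mull // dvdn1.
by apply: contraTneq p2 => ->.
Qed.

Lemma expMg_Rcentral (gT : finGroupType) (t a : gT) i :
  commute a [~ a, t] -> commute t [~ a, t] ->
  t ^- i * (t * a) ^+ i = a ^+ i * [~ a, t] ^+ 'C(i, 2).
Proof. by move=> cad ctd; rewrite expMg_Rmul // -!mulgA mulKg. Qed.

Lemma eq1_of_square_twist (gT : finGroupType) p (a d : gT) i :
    prime p -> (2 < p)%N -> a ^+ p = 1 -> d ^+ p = 1 ->
  d ^+ 2 = d ^+ i -> a ^+ 2 = a ^+ i * d ^+ 'C(i, 2) -> d = 1.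
Proof.
move=> pr_p p_gt2 ap dp d2i a2E; apply/eqP; apply: contraT => d_nt.
have od : #[d] = p by apply/prime_nt_dvdP; rewrite ?order_eq1 ?order_dvdn ?dp.
have i2 : (i %% p = 2)%N.
  by move/eqP: d2i; rewrite eq_expg_mod_order od modn_small // => /eqP.
have ai : a ^+ i = a ^+ 2 by rewrite -(expg_mod i ap) i2.
have dC : d ^+ 'C(i, 2) = 1 by apply: (mulgI (a ^+ 2)); rewrite mulg1 {2}a2E ai.
have := prime_ndvd_bin2_mod2 pr_p p_gt2 i2.
by rewrite -od order_dvdn dC eqxx.
Qed.

Section AbelianCommutator.

Variables (gT : finGroupType) (A : {group gT}) (t : gT).
Hypotheses (cAA : abelian A) (nAt : t \in 'N(A)).

Lemma mem_commg_norm x : x \in A -> [~ x, t] \in A.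
Proof. by move=> Ax; rewrite commgEl groupM ?groupV // memJ_norm. Qed.

Lemma commgMl_abelian : {in A &, {morph (fun x => [~ x, t]) : x y / x * y}}.
Proof.
move=> x y Ax Ay /=; rewrite commMgJ conjgE.
by rewrite (centsP cAA _ (mem_commg_norm Ax) _ Ay) mulKg.
Qed.

Lemma commgXl_abelian x k : x \in A -> [~ x ^+ k, t] = [~ x, t] ^+ k.
Proof.
move=> Ax; elim: k => [|k IHk]; first by rewrite comm1g.
by rewrite !expgSr commgMl_abelian ?groupX // IHk.
Qed.

Definition commg_morphism := Morphism commgMl_abelian.

End AbelianCommutator.

Section CyclicQuotient.

Variables (gT : finGroupType) (G A : {group gT}) (t : gT).
Hypotheses (cAA : abelian A) (nsAG : A <| G) (Gt : t \in G)
           (defGA : G / A = <[coset A t]>).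

Local Notation m := #[coset A t].

Let sAG : A \subset G := normal_sub nsAG.
Let nAG : G \subset 'N(A) := normal_norm nsAG.
Let nAt : t \in 'N(A) := subsetP nAG t Gt.

Definition coset_exponent x :=
  oapp val 0%N [pick i : 'I_m | coset A x == coset A t ^+ i].

Lemma coset_exponentP x : x \in G ->
  coset A x = coset A t ^+ coset_exponent x /\ (coset_exponent x < m)%N.
Proof.
move=> Gx; rewrite /coset_exponent; case: pickP => [i /eqP -> | none] //=.
have : coset A x \in <[coset A t]> by rewrite -defGA mem_quotient.
by case/cyclePmin=> i lti ci; have := none (Ordinal lti); rewrite /= ci eqxx.
Qed.

Lemma coset_exponent_expg i : (i < m)%N -> coset_exponent (t ^+ i) = i.
Proof.
move=> lti; have [cti lt_ti] := coset_exponentP (groupX i Gt).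
move/eqP: cti; rewrite morphX // eq_expg_mod_order.
by rewrite (modn_small lti) (modn_small lt_ti) => /eqP.
Qed.

Lemma coset_exponentM x y : x \in G -> y \in G ->
  coset_exponent (x * y) = ((coset_exponent x + coset_exponent y) %% m)%N.
Proof.
move=> Gx Gy; have [cx _] := coset_exponentP Gx; have [cy _] := coset_exponentP Gy.
have [cxy ltxy] := coset_exponentP (groupM Gx Gy).
rewrite -(modn_small ltxy); apply/eqP; rewrite -eq_expg_mod_order -cxy expgD.
by rewrite -cx -cy morphM // (subsetP nAG).
Qed.

Lemma mem_mulg_coset_exponent x : x \in G -> x * t ^- coset_exponent x \in A.
Proof.
move=> Gx; have [cx _] := coset_exponentP Gx.
have Nx := subsetP nAG x Gx.
apply: coset_idr; first by rewrite groupM ?groupV ?groupX.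
rewrite morphM ?groupV ?groupX // morphV ?groupX // morphX //.
by change (coset A x * (coset A t ^+ coset_exponent x)^-1 = 1); rewrite cx mulgV.
Qed.

Lemma twisted_class_conj_aut_sub a : a \in A ->
  twisted_class G (conj_aut G a) \subset [set [~ t ^+ i, a] | i : 'I_m].
Proof.
move=> Aa; apply/subsetP=> _ /imsetP[z Gz ->].
rewrite conj_autE ?(subsetP sAG a Aa) // -commgEl.
have [_ lt_zm] := coset_exponentP Gz.
apply/imsetP; exists (Ordinal lt_zm) => //=.
have Au := mem_mulg_coset_exponent Gz.
rewrite -{1}(mulgKV (t ^+ coset_exponent z) z) commMgJ.
by have /commgP/eqP -> := centsP cAA _ Au a Aa; rewrite conj1g mul1g.
Qed.

Section ShiftAutomorphism.

Variable a : gT.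
Hypotheses (Aa : a \in A) (shift_exp : (t * a) ^+ m = t ^+ m).

Let w i := t ^- i * (t * a) ^+ i.

Let wD i j : w (i + j) = w i ^ (t ^+ j) * w j.
Proof. by rewrite /w !expgD invMg conjgE !mulgA mulgK. Qed.

Let wA i : w i \in A.
Proof.
elim: i => [|i IHi]; first by rewrite /w !expg0 invg1 mulg1 group1.
have w1 : w 1 = a by rewrite /w !expg1 mulKg.
by rewrite -addn1 wD groupM ?memJ_norm ?groupX // w1.
Qed.

Let wmod i : w (i %% m) = w i.
Proof.
have tmA : t ^+ m \in A.
  by apply: coset_idr; rewrite ?groupX // morphX // expg_order.
rewrite {2}(divn_eq i m) addnC; elim: (i %/ m)%N => [|q IHq].
  by rewrite mul0n addn0.
have wm : w m = 1 by rewrite /w shift_exp mulVg.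
rewrite mulSnr addnA wD -IHq wm mulg1 conjgE.
by rewrite (centsP cAA _ (wA _) _ tmA) mulKg.
Qed.

(* On the coset A t^i, f multiplies by w i: it fixes A and sends t to t a. *)
Let f x := x * w (coset_exponent x).

Let fM : {in G &, {morph f : x y / x * y}}.
Proof.
move=> x y Gx Gy; rewrite /f coset_exponentM // wmod wD.
set j := coset_exponent y; set wx := w (coset_exponent x).
have -> : wx ^ (t ^+ j) = wx ^ y.
  rewrite -{1}(mulgKV (t ^+ j) y) conjgM; congr (_ ^ _).
  by rewrite conjgE (centsP cAA _ (wA _) _ (mem_mulg_coset_exponent Gy)) mulKg.
by rewrite conjgE -!mulgA mulKVg.
Qed.

Let f_injm : 'injm (Morphism fM).
Proof.
apply/injmP=> x y Gx Gy /= fxy.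
have cxy : coset A x = coset A y.
  rewrite -(coset_kerr x (wA (coset_exponent x))).
  by rewrite -(coset_kerr y (wA (coset_exponent y))) -/(f x) -/(f y) fxy.
by move: fxy; rewrite /f /coset_exponent cxy => /mulIg.
Qed.

Let f_morphim : Morphism fM @* G = G.
Proof.
apply/eqP; rewrite eqEcard card_injm // leqnn andbT morphimEdom.
by apply/subsetP=> _ /imsetP[x Gx ->]; rewrite /= /f groupM // (subsetP sAG).
Qed.

Lemma twisted_class_shift : exists2 phi, phi \in Aut G &
  twisted_class G phi = [set t ^- i * (t * a) ^+ i | i : 'I_m].
Proof.
exists (aut f_injm f_morphim); first exact: Aut_aut.
apply/setP=> g; apply/imsetP/imsetP=> [[z Gz ->] | [i _ ->]].
  rewrite autE //= /f mulKg.
  by exists (Ordinal (coset_exponentP Gz).2).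
exists (t ^+ i); first by rewrite groupX.
by rewrite autE ?groupX //= /f mulKg coset_exponent_expg.
Qed.

End ShiftAutomorphism.

End CyclicQuotient.

Section TwistedClassesSubgroups.

Variables (gT : finGroupType) (p n : nat) (G A : {group gT}) (t : gT).
Hypotheses (pr_p : prime p) (p_gt2 : (2 < p)%N) (cAA : abelian A)
           (pA : p.-group A) (nsAG : A <| G) (Gt : t \in G)
           (defGA : G / A = <[coset A t]>) (oGA : #|G / A| = (p ^ n)%N).
Hypothesis twisted_group : forall phi, phi \in Aut G -> group_set (twisted_class G phi).

Let sAG : A \subset G := normal_sub nsAG.
Let nAt : t \in 'N(A) := subsetP (normal_norm nsAG) t Gt.
Let ot : #[coset A t] = (p ^ n)%N. Proof. by rewrite -oGA defGA. Qed.

Lemma expg_commg_eq1 a : a \in A -> [~ a, t] ^+ (p ^ n) = 1.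
Proof.
move=> Aa; set g := [~ t, a].
have Aut_a : conj_aut G a \in Aut G.
  by rewrite (subsetP (Aut_conj_aut G G)) ?mem_morphim ?(subsetP (normG G)) ?(subsetP sAG).
have g_twisted : g \in twisted_class G (conj_aut G a).
  by apply/imsetP; exists t => //; rewrite conj_autE ?(subsetP sAG a Aa) // /g commgEl.
have le_g : (#[g] <= p ^ n)%N.
  rewrite -ot -[X in (_ <= X)%N]card_ord.
  apply: leq_trans (leq_imset_card (fun i : 'I__ => [~ t ^+ i, a]) _).
  apply: subset_leq_card (subset_trans _ (twisted_class_conj_aut_sub cAA nsAG Gt defGA Aa)).
  by rewrite -[twisted_class _ _]/(gval (Group (twisted_group Aut_a))) cycle_subG.
have [k ok] : {k | #[g] = (p ^ k)%N}.
  by apply/p_natP/(mem_p_elt pA); rewrite /g -invg_comm groupV mem_commg_norm.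
have : (#[g] %| p ^ n)%N.
  by rewrite ok dvdn_exp2l // -(leq_exp2l _ _ (prime_gt1 pr_p)) -ok.
by rewrite order_dvdn /g -invg_comm expgVn invg_eq1 => /eqP.
Qed.

Hypothesis n_gt0 : (0 < n)%N.

Lemma commg_eq1_of_commg2 a :
  a \in A -> a ^+ p = 1 -> [~ [~ a, t], t] = 1 -> [~ a, t] = 1.
Proof.
move=> Aa ap dt1; set d := [~ a, t].
have Ad : d \in A := mem_commg_norm nAt Aa.
have dp : d ^+ p = 1 by rewrite -(commgXl_abelian cAA nAt) // ap comm1g.
have cad : commute a d := centsP cAA a Aa d Ad.
have ctd : commute t d by apply/commgP; rewrite -invg_comm dt1 invg1.
have wE i : t ^- i * (t * a) ^+ i = a ^+ i * d ^+ 'C(i, 2) := expMg_Rcentral i cad ctd.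
have expg_dvd (x : gT) i : x ^+ p = 1 -> (p %| i)%N -> x ^+ i = 1.
  by move=> xp /dvdnP[q ->]; rewrite mulnC expgM xp expg1n.
have p_dvd_m : (p %| #[coset A t])%N by rewrite ot -{1}(expn1 p) dvdn_exp2l.
have shift : (t * a) ^+ #[coset A t] = t ^+ #[coset A t].
  apply: (mulgI (t ^- #[coset A t])); rewrite wE mulVg (expg_dvd a) // (expg_dvd d) ?mulg1 //.
  by rewrite prime_dvd_bin2 ?p_dvd_m.
have [phi Aut_phi tw_phi] := twisted_class_shift cAA nsAG Gt defGA Aa shift.
have gs := twisted_group Aut_phi; rewrite tw_phi in gs.
have m_gt1 : (1 < #[coset A t])%N by rewrite ot -(expn0 p) ltn_exp2l ?prime_gt1.
have a_tw : a \in [set t ^- i * (t * a) ^+ i | i : 'I_#[coset A t]].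
  by apply/imsetP; exists (Ordinal m_gt1); rewrite //= wE expg1 mulg1.
have /imsetP[i _] := (group_setP gs).2 a a a_tw a_tw.
rewrite wE -expg2 => a2E.
have d2i : d ^+ 2 = d ^+ i.
  have := congr1 (fun x => [~ x, t]) a2E.
  rewrite /= !(commgMl_abelian cAA nAt) ?groupX // !(commgXl_abelian cAA nAt) //.
  by rewrite -/d dt1 expg1n mulg1 expg2.
exact: eq1_of_square_twist pr_p p_gt2 ap dp d2i a2E.
Qed.

Lemma commg_eq1_Omega1 b : b \in A -> b ^+ p = 1 -> [~ b, t] = 1.
Proof.
have pG : p.-group G.
  rewrite /pgroup -(Lagrange sAG) -card_quotient ?normal_norm //.
  by rewrite oGA pnatM pnatX pnat_id // andbT; exact: pA.
pose c x := [~ x, t].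
have iter_lcn r x : x \in G -> iter r c x \in 'L_r.+1(G).
  elim: r => [|r IHr] Gx /=; first by rewrite lcn1.
  by rewrite lcnSn mem_commg ?IHr.
have iter_eq1 r y : y \in A -> y ^+ p = 1 -> iter r c y = 1 -> c y = 1.
  elim: r y => [|r IHr] y Ay yp; first by move=> /= ->; rewrite /c comm1g.
  rewrite iterSr => /IHr c2y; apply: commg_eq1_of_commg2 => //; apply: c2y.
    exact: mem_commg_norm.
  by rewrite /c -(commgXl_abelian cAA nAt) // yp comm1g.
move=> Ab bp; apply: (iter_eq1 (nil_class G)) => //.
have := iter_lcn (nil_class G) b (subsetP sAG b Ab).
by rewrite (lcn_nil_classP _ (pgroup_nil pG) (leqnn _)) inE => /eqP.
Qed.

End TwistedClassesSubgroups.

Local Close Scope group_scope.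
Unset Implicit Arguments.

Theorem mainTheorem12 (gT : finGroupType) (p n : nat) (G A : {group gT}) (t : gT) :
  prime p -> (2 < p)%N -> (0 < n)%N ->
  (abelian A)%g -> (p.-group A)%g -> (A <| G)%g ->
  t \in G -> (G / A)%g = <[coset A t]>%g -> #|(G / A)%g| = (p ^ n)%N ->
  (forall phi, phi \in Aut G -> group_set (twisted_class G phi)) ->
  exists theta : {morphism A >-> gT},
    [/\ forall a, a \in A -> theta a \in Omega_set p n A,
        forall a, a \in A -> (a ^ t)%g = (a * theta a)%g
      & forall k, (1 <= k <= n)%N ->
          (theta @* (Omega_set p k A))%g \subset Omega_set p k.-1 A].
Proof.
move=> pr_p p_gt2 n_gt0 cAA pA nsAG Gt defGA oGA twisted_group.
have nAt : (t \in 'N(A))%g := subsetP (normal_norm nsAG) t Gt.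
exists (commg_morphism cAA nAt); split=> [a Aa | a Aa | k /andP[k_gt0 _]] /=.
- rewrite inE mem_commg_norm //=.
  by rewrite (expg_commg_eq1 pr_p cAA pA nsAG Gt defGA oGA twisted_group Aa).
- exact: conjg_mulR.
apply/subsetP=> _ /morphimP[x Ax + ->]; rewrite inE => /andP[_ /eqP xk].
rewrite /= inE mem_commg_norm //= -(commgXl_abelian cAA nAt) //.
rewrite (commg_eq1_Omega1 pr_p p_gt2 cAA pA nsAG Gt defGA oGA twisted_group) ?groupX //.
by rewrite -expgM -expnSr prednK.
Qed.
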